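(* For all integers $1\le j\le k$, writing $[m]=\{0,1,\ldots,m\}$, we have $(j+1)\,d([k-j])\le 2\,d([k-1])$. Equality holds if and only if $j=1$, or $k=3$ and $j=2$.
   Context: For $A,B\subseteq\mathbb{N}=\{0,1,\ldots\}$, $A+B=\{a+b:a\in A,b\in B\}$. For a nonempty finite $C\subseteq\mathbb{N}$, $d(C)$ is the number of sets $B\subseteq\mathbb{N}$ such that $B+D=C$ for some $D\subseteq\mathbb{N}$. *)

From mathcomp Require Import all_boot.
From mathcomp Require Import boolp classical_sets cardinality.
Set Implicit Arguments. Unset Strict Implicit. Unset Printing Implicit Defensive.
Local Open Scope classical_set_scope.

Definition sumset (A B : set nat) : set nat :=
  [set c | exists a b, A a /\ B b /\ c = (a + b)%N].

Definition interval0 (m : nat) : set nat := [set n | (n <= m)%N].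

Definition dset (C : set nat) : set (set nat) :=
  [set B | exists D : set nat, sumset B D = C].

Definition d_eq (C : set nat) (n : nat) : Prop := (dset C #= `I_n)%card.

From mathcomp Require Import all_boot.
From mathcomp Require Import boolp classical_sets cardinality finmap.
From mathcomp Require Import zify.
Set Implicit Arguments. Unset Strict Implicit. Unset Printing Implicit Defensive.

Local Open Scope classical_set_scope.

Implicit Types (a c n x y : nat) (s t : seq nat).

(* A set B with B + D = [n] contains 0 and lies in [n], so it is the set
   [psums 0 s] of partial sums of the sequence s of its consecutive gaps.  Such a
   D exists iff sumn s + maxgap s <= n + 1, and then D = [n - max B] works.  So
   d([n]) counts these admissible gap sequences, and d([n+1]) - d([n]) counts the
   tight ones, with sumn s + maxgap s = n + 2.  An admissible s is made tight by
   appending one gap equal to its slack n + 2 - sumn s - maxgap s when the slack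
   is at most maxgap s, and otherwise by appending (slack + maxgap s)/2, followed
   by a gap 1 if that division is not exact.  Both maps are injective and the
   first one is not onto for n >= 2, so 2 d([n+1]) >= 3 d([n]) with equality only
   for n = 1.  Iterating gives (j + 1) d([m]) <= 2 d([m + j - 1]), with equality
   only for j = 1, or j = 2 and m = 1. *)

Definition maxgap (s : seq nat) : nat := foldr maxn 0 s.
Definition pos_seq (s : seq nat) : bool := all (fun x => 0 < x) s.
Definition span (s : seq nat) : nat := sumn s + maxgap s.

Definition admissible (n : nat) (s : seq nat) : bool := pos_seq s && (span s <= n.+1).
Definition tight (n : nat) (s : seq nat) : bool := pos_seq s && (span s == n.+1).

Lemma maxgap_leq s m : {in s, forall x, x <= m} -> maxgap s <= m.
Proof.
elim: s => //= y s IH le_sm; rewrite geq_max le_sm ?mem_head // IH // => x xs.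
by rewrite le_sm // in_cons xs orbT.
Qed.

Lemma maxgap_rcons s x : maxgap (rcons s x) = maxn (maxgap s) x.
Proof. elim: s => //= [|y s ->]; lia. Qed.

Lemma pos_seq_rcons s x : pos_seq (rcons s x) = pos_seq s && (0 < x).
Proof. by rewrite /pos_seq all_rcons andbC. Qed.

Lemma span_rcons s x : span (rcons s x) = sumn s + x + maxn (maxgap s) x.
Proof. by rewrite /span sumn_rcons maxgap_rcons. Qed.

Lemma maxgap_gt0 s : pos_seq s -> s != [::] -> 0 < maxgap s.
Proof. by case: s => //= x s /andP[x_gt0 _] _; rewrite leq_max x_gt0. Qed.

Lemma leq_size_sumn s : pos_seq s -> size s <= sumn s.
Proof. elim: s => //= x s IH /andP[x_gt0 /IH]; lia. Qed.

Lemma leq_sumn s x : x \in s -> x <= sumn s.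
Proof. elim: s => //= y s IH; rewrite in_cons => /orP[/eqP->|/IH]; lia. Qed.

Fixpoint psums (a : nat) (s : seq nat) : seq nat :=
  if s is x :: s' then a :: psums (a + x) s' else [:: a].

Definition gapset (s : seq nat) : set nat := [set` psums 0 s].

Lemma psums_ge a s y : y \in psums a s -> a <= y.
Proof.
elim: s a => [|x s IH] a /=; rewrite in_cons => /orP[/eqP->//|].
  by rewrite in_nil.
by move/IH; lia.
Qed.

Lemma psums_le a s y : y \in psums a s -> y <= a + sumn s.
Proof.
elim: s a => [|x s IH] a /=; rewrite in_cons => /orP[/eqP->|]; rewrite ?leq_addr //.
by move/IH; rewrite addnA.
Qed.

Lemma mem_psums_head a s : a \in psums a s.
Proof. by case: s => [|x s]; rewrite /= mem_head. Qed.

Lemma mem_psums_last a s : a + sumn s \in psums a s.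
Proof.
elim: s a => [|x s IH] a /=; first by rewrite addn0 mem_head.
by rewrite in_cons addnA IH orbT.
Qed.

Lemma sorted_psums a s : pos_seq s -> sorted ltn (psums a s).
Proof.
elim: s a => [|x s IH] a //= /andP[x_gt0 pos_s].
rewrite (path_sortedE ltn_trans) IH // andbT.
by apply/allP => y /psums_ge; lia.
Qed.

Lemma head_psums a s : head 0 (psums a s) = a.
Proof. by case: s. Qed.

Lemma psums_inj a : injective (psums a).
Proof.
move=> s s'; elim: s a s' => [|x s IH] a [|x' s'] //=; first by case: s'.
  by case: s IH.
case=> eq_ps; have := congr1 (head 0) eq_ps; rewrite !head_psums => /eqP.
by rewrite eqn_add2l => /eqP eq_x; rewrite -eq_x in eq_ps *; rewrite (IH _ _ eq_ps).
Qed.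

Lemma gapset_inj s s' : pos_seq s -> pos_seq s' -> gapset s = gapset s' -> s = s'.
Proof.
move=> pos_s pos_s' eq_B; apply: (@psums_inj 0).
apply: (irr_sorted_eq ltn_trans ltnn (sorted_psums 0 pos_s) (sorted_psums 0 pos_s')).
move=> y; apply/idP/idP => y_in.
  by have : gapset s' y by rewrite -eq_B.
by have : gapset s y by rewrite eq_B.
Qed.

Lemma psums_cover a s c : a <= c ->
  exists2 y, y \in psums a s & y <= c /\ (c < y + maxgap s \/ y = a + sumn s).
Proof.
elim: s a => [|x s IH] a le_ac /=.
  by exists a; rewrite ?mem_head //; split => //; right; lia.
have [lt_c_ax|le_ax_c] := ltnP c (a + x).
  by exists a; rewrite ?mem_head //; split => //; left; rewrite /maxgap /=; lia.
have [y y_in [le_yc cov]] := IH (a + x) le_ax_c.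
exists y; first by rewrite in_cons y_in orbT.
by split => //; case: cov => cov; [left; rewrite /maxgap /= -/(maxgap s)|right]; lia.
Qed.

Lemma maxgap_le_of_cover a s K : pos_seq s ->
  (forall c, a <= c < a + sumn s -> exists2 y, y \in psums a s & y <= c <= y + K) ->
  maxgap s <= K.+1.
Proof.
elim: s a => [|x s IH] a //= /andP[x_gt0 pos_s] cov.
rewrite /maxgap /= -/(maxgap s) geq_max; apply/andP; split.
  have [|y] := cov (a + x).-1; first lia.
  by rewrite in_cons => /orP[/eqP->|/psums_ge]; lia.
apply: (IH (a + x)) => // c c_range.
have [|y] := cov c; first lia.
rewrite in_cons => /orP[/eqP->|y_in] le_c.
  by exists (a + x); [exact: mem_psums_head | lia].
by exists y.
Qed.

Lemma psums_of_bounded_set M a (B : set nat) : B a ->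
  (forall x, B x -> a <= x <= a + M) ->
  exists2 s, pos_seq s & [set` psums a s] = B.
Proof.
elim: M a B => [|M IH] a B Ba B_bnd.
  exists [::] => //; apply/seteqP; split => x /=; rewrite mem_seq1.
    by move/eqP->.
  by move/B_bnd; lia.
have [[x0 [Bx0 lt_ax0]]|no_next] := pselect (exists x, B x /\ a < x); last first.
  apply: (IH a B Ba) => x Bx.
  have le_xa : x <= a by rewrite leqNgt; apply/negP => lt_ax; apply: no_next; exists x.
  by have := B_bnd x Bx; lia.
have ex_next : exists x, `[< B x /\ a < x >] by exists x0; apply/asboolP.
have [a' /asboolP[Ba' lt_aa'] min_a'] := ex_minnP ex_next.
have next_bnd x : B x /\ a < x -> a' <= x <= a' + M.
  case=> Bx lt_ax; have := min_a' x (asboolT (conj Bx lt_ax)).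
  by have := B_bnd x Bx; lia.
have [s pos_s eq_s] := IH a' [set x | B x /\ a < x] (conj Ba' lt_aa') next_bnd.
exists ((a' - a) :: s); first by rewrite /pos_seq /= subn_gt0 lt_aa'.
rewrite /= subnKC ?(ltnW lt_aa') //; apply/seteqP; split => x /=; rewrite in_cons.
  case/orP => [/eqP->//|x_in].
  by have [] : [set x | B x /\ a < x] x by rewrite -eq_s.
move=> Bx; have [lt_ax|le_xa] := ltnP a x.
  by apply/orP; right; have : [set` psums a' s] x by rewrite eq_s.
by apply/orP; left; apply/eqP; have := B_bnd x Bx; lia.
Qed.

Lemma sumset_gapset_interval0 n s : admissible n s ->
  sumset (gapset s) (interval0 (n - sumn s)) = interval0 n.
Proof.
case/andP => pos_s span_s.
have le_sum_n : sumn s <= n.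
  by case: s pos_s span_s => //= x s /andP[x_gt0 _]; rewrite /span /maxgap /=; lia.
apply/seteqP; split => c /=.
  by case=> y [d [/psums_le y_le [d_le ->]]]; rewrite /interval0 /= in d_le *; lia.
rewrite /interval0 /= => le_cn.
have [y y_in [le_yc cov]] := psums_cover s (leq0n c).
exists y, (c - y); do ![split] => //; last by lia.
by rewrite /interval0 /=; case: cov; rewrite /span in span_s; lia.
Qed.

Lemma gapset_of_sumset_interval0 n (B D : set nat) : sumset B D = interval0 n ->
  exists2 s, admissible n s & gapset s = B.
Proof.
move=> BD_n.
have [a0 [d0 [Ba0 [Dd0 /esym/eqP]]]] : sumset B D 0 by rewrite BD_n.
rewrite addn_eq0 => /andP[/eqP a0_0 /eqP d0_0]; subst a0 d0.
have le_n x d : B x -> D d -> x + d <= n.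
  move=> Bx Dd; suff : sumset B D (x + d) by rewrite BD_n.
  by exists x, d.
have [s pos_s eq_s] : exists2 s, pos_seq s & [set` psums 0 s] = B.
  by apply: (psums_of_bounded_set (M := n)) => // x /le_n /(_ Dd0); lia.
have B_sum : B (sumn s) by rewrite -eq_s /= -[sumn s]add0n mem_psums_last.
exists s => //; rewrite /admissible pos_s /span.
have le_maxgap : maxgap s <= (n - sumn s).+1.
  apply: (maxgap_le_of_cover (a := 0) pos_s) => c /andP[_ lt_c].
  have : interval0 n c by have := le_n _ _ B_sum Dd0; rewrite /interval0 /=; lia.
  rewrite -BD_n => -[y [d [By [Dd ->]]]].
  by exists y; [rewrite -eq_s in By | have := le_n _ _ B_sum Dd; lia].
by have := le_n _ _ B_sum Dd0; lia.
Qed.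

Lemma dset_interval0 n : dset (interval0 n) = gapset @` [set s | admissible n s].
Proof.
apply/seteqP; split => B /=.
  by case=> D /gapset_of_sumset_interval0[s adm_s <-]; exists s.
by case=> s adm_s <-; exists (interval0 (n - sumn s)); exact: sumset_gapset_interval0.
Qed.

Lemma card_eq_uniq (T : choiceType) (s : seq T) :
  uniq s -> ([set` s] #= `I_(size s))%card.
Proof.
move=> uniq_s; have -> : size s = #|` [fset x in s]%fset| by rewrite card_fseq undup_id.
have -> : [set` s] = [set` [fset x in s]%fset] by apply/seteqP; split => x /=; rewrite inE.
exact/card_eq_fsetP.
Qed.

Lemma leq_size_inj_in (T1 T2 : eqType) (A : seq T1) (B : seq T2) (f : T1 -> T2) :
  uniq A -> {in A &, injective f} -> {in A, forall z, f z \in B} ->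
  size A <= size B.
Proof.
move=> uniq_A inj_f f_AB; rewrite -(size_map f); apply: uniq_leq_size.
  by rewrite map_inj_in_uniq.
by move=> _ /mapP[x xA ->]; apply: f_AB.
Qed.

Lemma ltn_size_inj_in (T1 T2 : eqType) (A : seq T1) (B : seq T2) (f : T1 -> T2) b :
  uniq A -> {in A &, injective f} -> {in A, forall z, f z \in B} ->
  b \in B -> {in A, forall z, f z != b} -> size A < size B.
Proof.
move=> uniq_A inj_f f_AB bB f_neq_b; rewrite -(size_map f) -/(size (b :: _)).
apply: uniq_leq_size.
  rewrite /= map_inj_in_uniq // uniq_A andbT.
  by apply/mapP => -[x xA /esym/eqP]; rewrite (negbTE (f_neq_b x xA)).
by move=> y; rewrite in_cons => /orP[/eqP->//|/mapP[x xA ->]]; apply: f_AB.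
Qed.

Fixpoint bounded_seqs (L M : nat) : seq (seq nat) :=
  if L is L'.+1 then [::] :: [seq x :: s | x <- iota 1 M, s <- bounded_seqs L' M]
  else [:: [::]].

Lemma mem_bounded_seqs L M s :
  (s \in bounded_seqs L M) = (size s <= L) && all (fun x => 0 < x <= M) s.
Proof.
elim: L s => [|L IH] [|x s] //=; rewrite in_cons /=; apply/allpairsP/idP.
  case=> -[y t] /= [y_in t_in [-> ->]]; move: y_in t_in.
  by rewrite mem_iota IH add1n ltnS => -> /andP[le_t ->] /=; rewrite ltnS le_t.
case/andP=> size_s /andP[x_range all_s]; exists (x, s) => /=.
by rewrite mem_iota IH all_s andbT; split => //; lia.
Qed.

Lemma uniq_bounded_seqs L M : uniq (bounded_seqs L M).
Proof.
elim: L => [|L IH] //=; apply/andP; split.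
  by apply/allpairsP => -[[y t]] /= [].
apply: allpairs_uniq => //; first exact: iota_uniq.
by move=> [a b] [c d] _ _ /= [-> ->].
Qed.

Definition admissibles (n : nat) : seq (seq nat) :=
  [seq s <- bounded_seqs n.+1 n.+1 | admissible n s].
Definition tights (n : nat) : seq (seq nat) := [seq s <- admissibles n | tight n s].
Definition dcount (n : nat) : nat := size (admissibles n).

Lemma mem_admissibles n s : (s \in admissibles n) = admissible n s.
Proof.
rewrite mem_filter; apply: andb_idr.
rewrite /admissible mem_bounded_seqs => /andP[pos_s span_s].
rewrite /span in span_s; apply/andP; split; first by have := leq_size_sumn pos_s; lia.
apply/allP => x x_s; have := leq_sumn x_s; have := allP pos_s x x_s; lia.
Qed.

Lemma uniq_admissibles n : uniq (admissibles n).
Proof. exact/filter_uniq/uniq_bounded_seqs. Qed.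

Lemma mem_tights n s : (s \in tights n) = tight n s.
Proof.
rewrite mem_filter mem_admissibles; apply: andb_idr; rewrite /tight /admissible.
by case/andP=> -> /eqP ->; rewrite ltnSn.
Qed.

Lemma uniq_tights n : uniq (tights n).
Proof. exact/filter_uniq/uniq_admissibles. Qed.

Lemma d_eq_dcount n : d_eq (interval0 n) (dcount n).
Proof.
rewrite /d_eq dset_interval0; apply: card_eq_trans (inj_card_eq _) _.
  by move=> s t /set_mem/andP[pos_s _] /set_mem/andP[pos_t _]; exact: gapset_inj.
have -> : [set s | admissible n s] = [set` admissibles n].
  by apply/seteqP; split => s /=; rewrite mem_admissibles.
exact/card_eq_uniq/uniq_admissibles.
Qed.

Lemma dcount_gt0 n : 0 < dcount n.
Proof.
have : [::] \in admissibles n by rewrite mem_admissibles.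
by rewrite /dcount; case: (admissibles n).
Qed.

Lemma dcount_succ n : dcount n.+1 = dcount n + size (tights n.+1).
Proof.
rewrite /dcount -size_cat; apply/perm_size/uniq_perm.
- exact: uniq_admissibles.
- rewrite cat_uniq uniq_admissibles uniq_tights andbT /=.
  apply/hasP => -[s]; rewrite mem_tights mem_admissibles /tight /admissible.
  by case: (pos_seq s) => //=; lia.
- move=> s; rewrite mem_cat mem_tights !mem_admissibles /tight /admissible.
  by case: (pos_seq s) => //=; lia.
Qed.

Definition slack n s : nat := n.+2 - span s.

Definition extend_small n s : seq nat := rcons s (slack n s).

Definition extend_large n s : seq nat :=
  let q := (slack n s + maxgap s)./2 in
  if odd (slack n s + maxgap s) then rcons (rcons s q) 1 else rcons s q.

Lemma tight_extend_small n s : admissible n s -> slack n s <= maxgap s ->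
  tight n.+1 (extend_small n s).
Proof.
case/andP=> pos_s span_s; rewrite /slack /span in span_s *.
rewrite /tight /extend_small pos_seq_rcons span_rcons pos_s /slack /span => small.
by apply/andP; split; [|apply/eqP]; lia.
Qed.

Lemma extend_large_spec n s : admissible n s -> maxgap s < slack n s ->
  tight n.+1 (extend_large n s) /\
  exists q, extend_large n s = rcons s q /\ maxgap s < q \/
            extend_large n s = rcons (rcons s q) 1 /\ 0 < q.
Proof.
case/andP=> pos_s span_s large.
have sum_ge2 : 2 <= slack n s + maxgap s.
  have [->|s_nz] := eqVneq s [::]; first by rewrite /slack /span /maxgap /=; lia.
  by have := maxgap_gt0 pos_s s_nz; lia.
have := odd_double_half (slack n s + maxgap s); rewrite -muln2 /extend_large /tight.
case: odd => /= double_half.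
  rewrite !pos_seq_rcons pos_s !span_rcons sumn_rcons maxgap_rcons.
  move: large sum_ge2 span_s double_half; rewrite /slack /span => *.
  split; first by apply/andP; split; [|apply/eqP]; lia.
  by eexists; right; split; [reflexivity|lia].
rewrite pos_seq_rcons pos_s span_rcons.
move: large sum_ge2 span_s double_half; rewrite /slack /span => *.
split; first by apply/andP; split; [|apply/eqP]; lia.
by eexists; left; split; [reflexivity|lia].
Qed.

Lemma size_small_slack_lt_tights n : 2 <= n ->
  size [seq s <- admissibles n | slack n s <= maxgap s] < size (tights n.+1).
Proof.
move=> n_ge2.
(* The tight sequence [1; ...; 1; 2] ends with a gap exceeding all earlier ones. *)
pose t := rcons (nseq (n - 2) 1) 2.
have maxgap_ones : maxgap (nseq (n - 2) 1) <= 1.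
  by apply: maxgap_leq => x /nseqP[->].
have sumn_ones : sumn (nseq (n - 2) 1) = n - 2.
  by elim: (n - 2) => //= m ->; rewrite add1n.
apply: (ltn_size_inj_in (f := extend_small n) (b := t)).
- exact/filter_uniq/uniq_admissibles.
- by move=> s s' _ _ /rcons_inj[].
- move=> s; rewrite mem_filter mem_admissibles mem_tights => /andP[small adm_s].
  exact: tight_extend_small.
- rewrite mem_tights /tight pos_seq_rcons span_rcons sumn_ones.
  have -> : pos_seq (nseq (n - 2) 1) by apply/allP => x /nseqP[->].
  by apply/eqP; lia.
- move=> s; rewrite mem_filter => /andP[small _].
  apply/eqP => /rcons_inj[eq_s eq_slack].
  by move: small; rewrite eq_slack eq_s; lia.
Qed.

Lemma size_large_slack_le_tights n :
  size [seq s <- admissibles n | maxgap s < slack n s] <= size (tights n.+1).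
Proof.
apply: (leq_size_inj_in (f := extend_large n)).
- exact/filter_uniq/uniq_admissibles.
- move=> s s'; rewrite !mem_filter => /and3P[large adm _] /and3P[large' adm' _].
  have [_ [q [[-> lt_q]|[-> q_gt0]]]] := extend_large_spec adm large;
  have [_ [q' [[-> lt_q']|[-> q'_gt0]]]] := extend_large_spec adm' large'.
  + by case/rcons_inj.
  + by case/rcons_inj => eq_s eq_q; move: lt_q; rewrite eq_s eq_q maxgap_rcons; lia.
  + by case/rcons_inj => eq_s eq_q; move: lt_q'; rewrite -eq_s -eq_q maxgap_rcons; lia.
  + by case/rcons_inj => /rcons_inj[].
- move=> s; rewrite mem_filter mem_admissibles mem_tights => /andP[large adm].
  by have [] := extend_large_spec adm large.
Qed.

Lemma dcount_lt_tights n : 2 <= n -> dcount n < 2 * size (tights n.+1).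
Proof.
move=> n_ge2; have small := size_small_slack_lt_tights n_ge2.
have large := size_large_slack_le_tights n.
rewrite /dcount -(count_predC (fun s => slack n s <= maxgap s)).
have -> : count (predC (fun s => slack n s <= maxgap s)) (admissibles n) =
          count (fun s => maxgap s < slack n s) (admissibles n).
  by apply: eq_count => s /=; rewrite ltnNge.
by rewrite -!size_filter; lia.
Qed.

Lemma dcount_succ_leqif n : 3 * dcount n <= 2 * dcount n.+1 ?= iff (n == 1).
Proof.
case: n => [|[|n]]; [by vm_compute | by vm_compute |].
have := dcount_lt_tights (isT : 2 <= n.+2); rewrite (dcount_succ n.+2) => lt_tights.
by split; [|apply/negbTE/eqP]; lia.
Qed.

Lemma dcount_growth m i : (i + 2) * dcount m <= 2 * dcount (m + i).
Proof.
elim: i => [|i IH]; first by rewrite addn0.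
have [le_succ _] := dcount_succ_leqif (m + i).
by rewrite [m + i.+1]addnS; lia.
Qed.

Lemma dcount_growth_leqif m i :
  (i + 2) * dcount m <= 2 * dcount (m + i) ?= iff (i == 0) || (i == 1) && (m == 1).
Proof.
case: i => [|[|i]]; first by rewrite addn0; apply/leqif_refl.
  by rewrite addn1; exact: dcount_succ_leqif.
have dm_gt0 := dcount_gt0 m; have le_growth := dcount_growth m i.+1.
have [le_succ _] := dcount_succ_leqif (m + i.+1).
have lt_growth : (i.+2 + 2) * dcount m < 2 * dcount (m + i.+2).
  by rewrite [m + i.+2]addnS; lia.
by split; [exact: ltnW | apply/negbTE; rewrite neq_ltn lt_growth].
Qed.

Theorem mainTheorem8 (j k : nat) (hj : (1 <= j)%N) (hjk : (j <= k)%N) :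
  exists a b : nat,
    d_eq (interval0 (k - j)) a /\ d_eq (interval0 (k - 1)) b /\
    ((j + 1) * a <= 2 * b)%N /\
    ((j + 1) * a = 2 * b <-> j = 1 \/ (k = 3 /\ j = 2)).
Proof.
exists (dcount (k - j)), (dcount (k - 1)).
do 2!(split; first exact: d_eq_dcount).
have [le_growth eq_growth] := dcount_growth_leqif (k - j) (j - 1).
have sum_idx : k - j + (j - 1) = k - 1 by lia.
have coef : j - 1 + 2 = j + 1 by lia.
rewrite sum_idx coef in le_growth eq_growth.
split=> //; rewrite [_ * _ = _](rwP eqP) eq_growth.
split=> [/orP[/eqP|/andP[/eqP /eqP]]|[->|[-> ->]]] //; lia.
Qed.
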